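(* Let $N>0$. (i) If $\tau\in(\tau_0^{(1)},\tau_1^{(1)})$, then $\beta_1^{**}(\tau)=\varphi_2^+(\beta_2^*(\tau))$, equivalently $\beta_2^*(\tau)=\varphi_1^+(\beta_1^{**}(\tau))$. In particular $$4(N+1)<\underline\beta_1(\tau)<\beta_1^{**}(\tau)<\overline\beta_1(\tau)\quad\text{and}\quad \underline\beta_2(\tau)<\beta_2^*(\tau)<\overline\beta_2(\tau).$$ (ii) If $\tau\in(\tau_0^{(2)},\tau_1^{(2)})$, then $\beta_2^{**}(\tau)=\varphi_1^+(\beta_1^*(\tau))$, equivalently $\beta_1^*(\tau)=\varphi_2^+(\beta_2^{**}(\tau))$. In particular $$4<\underline\beta_2(\tau)<\beta_2^{**}(\tau)<\overline\beta_2(\tau)\quad\text{and}\quad \underline\beta_1(\tau)<\beta_1^*(\tau)<\overline\beta_1(\tau).$$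
   Context: For $\tau\in(0,1)$, with $D=(N+1)^2+2\tau(N+1)+1$: $$\underline\beta_1(\tau)=\tfrac{2}{1-\tau^2}(N+1+\tau+\tau\sqrt D),\qquad \overline\beta_1(\tau)=\tfrac{2}{1-\tau^2}(N+1+\tau+\sqrt D),$$ $$\underline\beta_2(\tau)=\tfrac{2}{1-\tau^2}(1+\tau(N+1)+\tau\sqrt D),\qquad \overline\beta_2(\tau)=\tfrac{2}{1-\tau^2}(1+\tau(N+1)+\sqrt D);$$ $$\beta_1^*(\tau)=4(N+1)+8\tau,\quad \beta_2^*(\tau)=4+8\tau(N+1),\quad \beta_1^{**}(\tau)=8\tau(1+2\tau(N+1)),\quad \beta_2^{**}(\tau)=8\tau(N+1+2\tau);$$ $$\tau_0^{(1)}=\frac{N+1}{1+\sqrt{1+4(N+1)^2}},\qquad \tau_0^{(2)}=\frac{1}{N+1+\sqrt{(N+1)^2+4}};$$ $\tau_1^{(1)}$ is the unique positive zero of $2(1-2\tau^2)(1+2\tau(N+1))-1$ and $\tau_1^{(2)}$ the unique positive zero of $2(1-2\tau^2)(N+1+2\tau)-(N+1)$; $$\varphi_1^+(\beta_1)=2+\tau\beta_1+\sqrt{(2+\tau\beta_1)^2-\beta_1(\beta_1-4(N+1))}\ \ (0<\beta_1\le\overline\beta_1(\tau)),$$ $$\varphi_2^+(\beta_2)=2(N+1)+\tau\beta_2+\sqrt{(2(N+1)+\tau\beta_2)^2-\beta_2(\beta_2-4)}\ \ (0<\beta_2\le\overline\beta_2(\tau)).$$ *)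

From HB Require Import structures.
From mathcomp Require Import all_boot all_order all_algebra.
Set Implicit Arguments. Unset Strict Implicit. Unset Printing Implicit Defensive.
Import Order.TTheory GRing.Theory Num.Theory.
Local Open Scope ring_scope.

Section Defs.
Variable R : rcfType.
Variable N : nat.
Let M : R := (N.+1)%:R.

Definition Dd (t : R) : R := M ^+ 2 + 2 * t * M + 1.

Definition beta1_low (t : R) : R := 2 / (1 - t ^+ 2) * (M + t + t * Num.sqrt (Dd t)).
Definition beta1_up  (t : R) : R := 2 / (1 - t ^+ 2) * (M + t + Num.sqrt (Dd t)).
Definition beta2_low (t : R) : R := 2 / (1 - t ^+ 2) * (1 + t * M + t * Num.sqrt (Dd t)).
Definition beta2_up  (t : R) : R := 2 / (1 - t ^+ 2) * (1 + t * M + Num.sqrt (Dd t)).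

Definition beta1_s  (t : R) : R := 4 * M + 8 * t.
Definition beta2_s  (t : R) : R := 4 + 8 * t * M.
Definition beta1_ss (t : R) : R := 8 * t * (1 + 2 * t * M).
Definition beta2_ss (t : R) : R := 8 * t * (M + 2 * t).

Definition tau0_1 : R := M / (1 + Num.sqrt (1 + 4 * M ^+ 2)).
Definition tau0_2 : R := 1 / (M + Num.sqrt (M ^+ 2 + 4)).

(* polynomials whose unique positive zeros are tau_1^(1), tau_1^(2) *)
Definition g1 (t : R) : R := 2 * (1 - 2 * t ^+ 2) * (1 + 2 * t * M) - 1.
Definition g2 (t : R) : R := 2 * (1 - 2 * t ^+ 2) * (M + 2 * t) - M.

(* phi_1^+, phi_2^+ at parameter t (only used on their domains
   0 < beta <= beta_up t, which the theorem asserts explicitly). *)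
Definition phi1p (t b : R) : R :=
  2 + t * b + Num.sqrt ((2 + t * b) ^+ 2 - b * (b - 4 * M)).
Definition phi2p (t b : R) : R :=
  2 * M + t * b + Num.sqrt ((2 * M + t * b) ^+ 2 - b * (b - 4)).
End Defs.

From HB Require Import structures.
From mathcomp Require Import all_boot all_order all_algebra.
From mathcomp Require Import ring lra.
Set Implicit Arguments. Unset Strict Implicit. Unset Printing Implicit Defensive.
Import Order.TTheory GRing.Theory Num.Theory.
Local Open Scope ring_scope.

(* Both parts are one statement in two weights [a, b > 0]: part (i) is
   [(a, b) = (N+1, 1)] and part (ii) is [(a, b) = (1, N+1)].  Writing
   [P = 4 a t^2 + 2 b t - a] and [G = gpoly a b t], the condition
   [tau_0 < t] means [P > 0] and [t < tau_1] forces [G > 0].  The square roots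
   in phi^+ evaluated at beta^* resp. beta^** are exactly [2 P] resp. [2 G],
   which gives the identities, and each of the strict inequalities
   [x < sqrt D] is equivalent to [D - x^2 > 0], where [D - x^2] factors as a
   product of [P], [G], [1 - t^2] and obviously positive terms. *)

Section Generic.
Variable R : rcfType.
Implicit Types a b t x y q : R.

Definition discr a b t : R := a ^+ 2 + 2 * t * a * b + b ^+ 2.
Definition beta_low a b t : R :=
  2 / (1 - t ^+ 2) * (a + t * b + t * Num.sqrt (discr a b t)).
Definition beta_up a b t : R :=
  2 / (1 - t ^+ 2) * (a + t * b + Num.sqrt (discr a b t)).
Definition beta_s a b t : R := 4 * a + 8 * t * b.
Definition beta_ss a b t : R := 8 * t * (b + 2 * t * a).
Definition phip a b t (beta : R) : R :=
  2 * b + t * beta + Num.sqrt ((2 * b + t * beta) ^+ 2 - beta * (beta - 4 * a)).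
Definition tau0 a b : R := a / (b + Num.sqrt (b ^+ 2 + 4 * a ^+ 2)).
Definition gpoly a b t : R := 2 * (1 - 2 * t ^+ 2) * (b + 2 * t * a) - b.

Lemma discrC a b t : discr b a t = discr a b t.
Proof. by rewrite /discr; ring. Qed.

Lemma sqrtr_sqr_id x y : 0 <= x -> y = x ^+ 2 -> Num.sqrt y = x.
Proof. by move=> x_ge0 ->; rewrite sqrtr_sqr ger0_norm. Qed.

Lemma lt_of_sqr_gap x y q : 0 <= x -> x ^+ 2 - y ^+ 2 = q -> 0 < q -> y < x.
Proof. by move=> x_ge0 <- gap; nra. Qed.

Lemma ltr_pdivlMr_mul c d x y : 0 < d -> (y < c / d * x) = (y * d < c * x).
Proof. by move=> d_gt0; rewrite -mulrA (mulrC _ x) mulrA ltr_pdivlMr. Qed.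

Lemma ltr_pdivrMr_mul c d x y : 0 < d -> (c / d * x < y) = (c * x < y * d).
Proof. by move=> d_gt0; rewrite -mulrA (mulrC _ x) mulrA ltr_pdivrMr. Qed.

(* [tau0 a b] is the positive root of [4 a t^2 + 2 b t - a]. *)
Lemma tau0_lt a b t : 0 < a -> 0 < b -> tau0 a b < t ->
  0 < t /\ 0 < 4 * a * t ^+ 2 + 2 * b * t - a.
Proof.
move=> a_gt0 b_gt0; set s := Num.sqrt (b ^+ 2 + 4 * a ^+ 2).
have s_ge0 : 0 <= s by apply: sqrtr_ge0.
have s2 : s ^+ 2 = b ^+ 2 + 4 * a ^+ 2 by rewrite sqr_sqrtr //; nra.
rewrite /tau0 -/s ltr_pdivrMr; last by lra.
move=> lt_a; have t_gt0 : 0 < t by nra.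
have lt_s : s < 4 * a * t + b by nra.
by split => //; nra.
Qed.

Lemma gpoly_gt0 a b t t1 : 0 < a -> 0 <= b -> 0 < t -> t < t1 ->
  gpoly a b t1 = 0 -> 0 < gpoly a b t.
Proof.
move=> a_gt0 b_ge0 t_gt0 lt_t1 g_t1.
have t1_gt0 : 0 < t1 by lra.
have e : t1 * gpoly a b t = (t1 - t) * b + t * gpoly a b t1
    + 4 * t * t1 * (t1 - t) * (b + 2 * a * (t1 + t)) by rewrite /gpoly; ring.
rewrite g_t1 mulr0 addr0 in e.
suff : 0 < t1 * gpoly a b t by rewrite pmulr_rgt0.
rewrite e; apply: ltr_wpDl; first by nra.
apply: mulr_gt0; last by nra.
by apply: mulr_gt0; [nra | lra].
Qed.

Section Bounds.
Variables a b t : R.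
Hypotheses (a_gt0 : 0 < a) (b_gt0 : 0 < b) (t_gt0 : 0 < t).
Let P := 4 * a * t ^+ 2 + 2 * b * t - a.
Let G := gpoly a b t.
Hypotheses (P_gt0 : 0 < P) (G_gt0 : 0 < G).
Let S := Num.sqrt (discr a b t).

Let S_ge0 : 0 <= S. Proof. exact: sqrtr_ge0. Qed.

Let S2 : S ^+ 2 = discr a b t.
Proof.
have tab_gt0 : 0 < t * a * b by rewrite !mulr_gt0.
by rewrite sqr_sqrtr // /discr; nra.
Qed.

Let tS2 : (t * S) ^+ 2 = t ^+ 2 * discr a b t.
Proof. by rewrite exprMn S2. Qed.

Let onemt2_gt0 : 0 < 1 - t ^+ 2.
Proof.
rewrite subr_gt0 ltNge; apply/negP => t2_ge1.
have X_ge0 : 0 <= b + 2 * t * a by rewrite addr_ge0 ?mulr_ge0 ?ltW.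
have : 0 <= (t ^+ 2 - 1) * (b + 2 * t * a) by rewrite mulr_ge0 ?subr_ge0.
by move: G_gt0 (b_gt0); rewrite /G /gpoly; nra.
Qed.

(* [lra] and [nra] do not see section hypotheses; copy them into the context. *)
Local Ltac bounds :=
  move: (a_gt0) (b_gt0) (t_gt0) (P_gt0) (G_gt0) (S_ge0) (onemt2_gt0); intros.

Lemma beta_low_gt : 4 * a < beta_low a b t.
Proof.
bounds; rewrite ltr_pdivlMr_mul // -/S.
suff : 2 * a * (1 - t ^+ 2) - a - t * b < t * S by lra.
apply: (@lt_of_sqr_gap _ _ (P * a * (1 - t ^+ 2))); first by nra.
  by rewrite tS2 /discr /P; ring.
by apply: mulr_gt0 => //; apply: mulr_gt0.
Qed.

Lemma beta_low_lt_ss : beta_low a b t < beta_ss a b t.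
Proof.
bounds; rewrite ltr_pdivrMr_mul // -/S.
suff : t * S < t * G + P by rewrite /G /P /gpoly /beta_ss; lra.
apply: (@lt_of_sqr_gap _ _ (P * (1 - t ^+ 2) * (P + 2 * t * G))); first by nra.
  by rewrite tS2 /discr /P /G /gpoly; ring.
by apply: mulr_gt0; [apply: mulr_gt0 | nra].
Qed.

Lemma beta_ss_lt_up : beta_ss a b t < beta_up a b t.
Proof.
bounds; rewrite ltr_pdivlMr_mul // -/S.
suff : t * G + P < S by rewrite /G /P /gpoly /beta_ss; lra.
apply: (@lt_of_sqr_gap _ _ (G ^+ 2 * (1 - t ^+ 2))) => //.
  by rewrite S2 /discr /P /G /gpoly; ring.
by apply: mulr_gt0 => //; apply: exprn_gt0.
Qed.

Lemma beta_low_lt_s : beta_low b a t < beta_s b a t.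
Proof.
bounds; rewrite ltr_pdivrMr_mul // discrC -/S.
suff : t * S < b + 3 * t * a - 2 * b * t ^+ 2 - 4 * a * t ^+ 3
  by rewrite /beta_s; lra.
apply: (@lt_of_sqr_gap _ _ (G * (1 - t ^+ 2) * (b + 2 * t * a))).
- by move: G_gt0; rewrite /G /gpoly; nra.
- by rewrite tS2 /discr /G /gpoly; ring.
- by apply: mulr_gt0; [apply: mulr_gt0 | nra].
Qed.

Lemma beta_s_lt_up : beta_s b a t < beta_up b a t.
Proof.
bounds; rewrite ltr_pdivlMr_mul // discrC -/S.
suff : b + 3 * t * a - 2 * b * t ^+ 2 - 4 * a * t ^+ 3 < S
  by rewrite /beta_s; lra.
apply: (@lt_of_sqr_gap _ _ (P ^+ 2 * (1 - t ^+ 2))) => //.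
  by rewrite S2 /discr /P; ring.
by apply: mulr_gt0 => //; apply: exprn_gt0.
Qed.

Lemma phip_beta_s : phip b a t (beta_s b a t) = beta_ss a b t.
Proof.
bounds; rewrite /phip (@sqrtr_sqr_id (2 * P)); first by rewrite /P /beta_s /beta_ss; ring.
  by lra.
by rewrite /P /beta_s; ring.
Qed.

Lemma phip_beta_ss : phip a b t (beta_ss a b t) = beta_s b a t.
Proof.
bounds; rewrite /phip (@sqrtr_sqr_id (2 * G)); first by rewrite /G /gpoly /beta_s /beta_ss; ring.
  by lra.
by rewrite /G /gpoly /beta_ss; ring.
Qed.

End Bounds.

Theorem beta_bounds a b t1 t : 0 < a -> 0 < b -> gpoly a b t1 = 0 ->
  tau0 a b < t < t1 ->
  [/\ (0 < beta_s b a t <= beta_up b a t)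
        /\ beta_ss a b t = phip b a t (beta_s b a t),
      (0 < beta_ss a b t <= beta_up a b t)
        /\ beta_s b a t = phip a b t (beta_ss a b t),
      4 * a < beta_low a b t < beta_ss a b t,
      beta_ss a b t < beta_up a b t &
      beta_low b a t < beta_s b a t < beta_up b a t].
Proof.
move=> a_gt0 b_gt0 g_t1 /andP[/(tau0_lt a_gt0 b_gt0)[t_gt0 P_gt0] lt_t1].
have G_gt0 : 0 < gpoly a b t by apply: (gpoly_gt0 _ _ t_gt0 lt_t1); lra.
have s_gt0 : 0 < beta_s b a t by rewrite /beta_s; nra.
have ss_gt0 : 0 < beta_ss a b t by rewrite /beta_ss; nra.
have s_lt_up := beta_s_lt_up a_gt0 b_gt0 t_gt0 P_gt0 G_gt0.
have ss_lt_up := beta_ss_lt_up a_gt0 b_gt0 t_gt0 P_gt0 G_gt0.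
split.
- by rewrite s_gt0 ltW // (phip_beta_s a_gt0 b_gt0 t_gt0 P_gt0).
- by rewrite ss_gt0 ltW // (phip_beta_ss a_gt0 b_gt0 t_gt0 P_gt0).
- by rewrite beta_low_gt // beta_low_lt_ss.
- exact: ss_lt_up.
- by rewrite s_lt_up beta_low_lt_s.
Qed.

End Generic.

Section Instances.
Variables (R : rcfType) (N : nat).
Let M : R := (N.+1)%:R.

Lemma Dd_discr t : Dd N t = discr M 1 t.
Proof. by rewrite /Dd /discr; ring. Qed.

Lemma Dd_discrC t : Dd N t = discr 1 M t.
Proof. by rewrite /Dd /discr; ring. Qed.

Lemma beta1_lowE t : beta1_low N t = beta_low M 1 t.
Proof. by rewrite /beta1_low /beta_low Dd_discr mulr1. Qed.

Lemma beta1_upE t : beta1_up N t = beta_up M 1 t.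
Proof. by rewrite /beta1_up /beta_up Dd_discr mulr1. Qed.

Lemma beta2_lowE t : beta2_low N t = beta_low 1 M t.
Proof. by rewrite /beta2_low Dd_discrC. Qed.

Lemma beta2_upE t : beta2_up N t = beta_up 1 M t.
Proof. by rewrite /beta2_up Dd_discrC. Qed.

Lemma beta1_sE t : beta1_s N t = beta_s M 1 t.
Proof. by rewrite /beta_s mulr1. Qed.

Lemma beta2_sE t : beta2_s N t = beta_s 1 M t.
Proof. by rewrite /beta_s mulr1. Qed.

Lemma beta1_ssE t : beta1_ss N t = beta_ss M 1 t.
Proof. by []. Qed.

Lemma beta2_ssE t : beta2_ss N t = beta_ss 1 M t.
Proof. by rewrite /beta_ss mulr1. Qed.

Lemma phi1pE t beta : phi1p N t beta = phip M 1 t beta.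
Proof. by rewrite /phip mulr1. Qed.

Lemma phi2pE t beta : phi2p N t beta = phip 1 M t beta.
Proof. by rewrite /phip mulr1. Qed.

Lemma tau0_1E : @tau0_1 R N = tau0 M 1.
Proof. by rewrite /tau0 expr1n. Qed.

Lemma tau0_2E : @tau0_2 R N = tau0 1 M.
Proof. by rewrite /tau0 expr1n mulr1. Qed.

Lemma g1E t : g1 N t = gpoly M 1 t.
Proof. by []. Qed.

Lemma g2E t : g2 N t = gpoly 1 M t.
Proof. by rewrite /gpoly mulr1. Qed.

End Instances.

Definition instanceE := (beta1_lowE, beta1_upE, beta2_lowE, beta2_upE,
  beta1_sE, beta2_sE, beta1_ssE, beta2_ssE, phi1pE, phi2pE, tau0_1E, tau0_2E).

Theorem mainTheorem16 (R : rcfType) (N : nat) (HN : (0 < N)%N)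
    (t11 t12 : R)
    (Ht11 : 0 < t11) (Hg1 : g1 N t11 = 0)
    (Ht12 : 0 < t12) (Hg2 : g2 N t12 = 0) :
  (forall tau : R, @tau0_1 R N < tau < t11 ->
     [/\ (0 < beta2_s N tau <= beta2_up N tau)
           /\ beta1_ss N tau = phi2p N tau (beta2_s N tau),
         (0 < beta1_ss N tau <= beta1_up N tau)
           /\ beta2_s N tau = phi1p N tau (beta1_ss N tau),
         4 * (N.+1)%:R < beta1_low N tau < beta1_ss N tau,
         beta1_ss N tau < beta1_up N tau &
         beta2_low N tau < beta2_s N tau < beta2_up N tau])
  /\
  (forall tau : R, @tau0_2 R N < tau < t12 ->
     [/\ (0 < beta1_s N tau <= beta1_up N tau)
           /\ beta2_ss N tau = phi1p N tau (beta1_s N tau),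
         (0 < beta2_ss N tau <= beta2_up N tau)
           /\ beta1_s N tau = phi2p N tau (beta2_ss N tau),
         4 < beta2_low N tau < beta2_ss N tau,
         beta2_ss N tau < beta2_up N tau &
         beta1_low N tau < beta1_s N tau < beta1_up N tau]).
Proof.
have M_gt0 : 0 < (N.+1)%:R :> R by rewrite ltr0Sn.
rewrite g1E in Hg1; rewrite g2E in Hg2.
split => tau; rewrite !instanceE.
- exact: beta_bounds.
- by move=> t_range; have := beta_bounds ltr01 M_gt0 Hg2 t_range; rewrite mulr1.
Qed.
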